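(* Let $G$ be a finite group with $d(G) \geq 2$. Then $\mathrm{Cyc}(G)$ is the smallest normal subgroup $N$ of $G$ such that $\mathrm{Cyc}(G/N)$ is trivial; that is, $\mathrm{Cyc}(G/\mathrm{Cyc}(G))=1$, and $\mathrm{Cyc}(G) \leq N$ for every normal subgroup $N$ of $G$ with $\mathrm{Cyc}(G/N)=1$.
   Context: For a finite group $H$, $d(H)$ denotes the minimal size of a generating set of $H$. The cycliciser of a group $H$ is $\mathrm{Cyc}(H) = \{c \in H \mid \langle c,h\rangle \text{ is cyclic for all } h \in H\}$; for finite $H$ it is a normal subgroup of $H$. *)

From mathcomp Require Import all_boot all_fingroup all_solvable.
Set Implicit Arguments. Unset Strict Implicit. Unset Printing Implicit Defensive.
Local Open Scope group_scope.

Definition dgen (gT : finGroupType) (H : {set gT}) : nat :=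
  \big[minn/#|H|]_(A : {set gT} | (A \subset H) && (<<A>> == H)) #|A|.

Definition Cyc (gT : finGroupType) (H : {set gT}) : {set gT} :=
  [set c in H | [forall h in H, cyclic <<[set c; h]>>]].

From mathcomp Require Import all_boot all_fingroup all_solvable.
Set Implicit Arguments. Unset Strict Implicit. Unset Printing Implicit Defensive.
Local Open Scope group_scope.

(* Elements that pairwise generate cyclic subgroups generate a cyclic subgroup:
   they commute, and in each Sylow subgroup of the abelian group they generate,
   the cyclic subgroups of their p-parts form a chain, so that one p-part
   generates all the others.  Hence Cyc G is a central subgroup.  The image of
   Cyc G in G/N lies in Cyc (G/N), which gives minimality.  Conversely, if xC
   lies in Cyc (G/C) with C = Cyc G and h is in G, then <xC, hC> = <gC>, so x
   and h lie in <c1, c2, g> for some c1, c2 in C; this group is cyclic by the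
   first fact, whence x lies in Cyc G and Cyc (G/C) = 1. *)

Section PairwiseCyclic.
Variable gT : finGroupType.
Implicit Types (x y m : gT) (S : {set gT}).

Lemma mem_gen_set2l x y : x \in <<[set x; y]>>.
Proof. by rewrite mem_gen // !inE eqxx. Qed.

Lemma mem_gen_set2r x y : y \in <<[set x; y]>>.
Proof. by rewrite mem_gen // !inE eqxx orbT. Qed.

Lemma cyclic_set2_commute x y : cyclic <<[set x; y]>> -> commute x y.
Proof.
move=> /cyclic_abelian /centsP cxy.
exact: cxy (mem_gen_set2l x y) _ (mem_gen_set2r x y).
Qed.

Lemma p_elt_cyclic_set2_mem_cycle p x m : prime p ->
  p.-elt x -> p.-elt m -> cyclic <<[set x; m]>> -> #[x] <= #[m] -> x \in <[m]>.
Proof.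
move=> pr_p px pm cxm le_xm.
have sxG : <[x]> \subset <<[set x; m]>> by rewrite cycle_subG mem_gen_set2l.
have smG : <[m]> \subset <<[set x; m]>> by rewrite cycle_subG mem_gen_set2r.
rewrite -cycle_subG -(cardSg_cyclic cxm sxG smG) -!orderE.
move: le_xm; rewrite -(part_pnat_id px) -(part_pnat_id pm) !p_part.
by rewrite leq_exp2l ?prime_gt1 //; apply: dvdn_exp2l.
Qed.

Lemma p_elt_pairwise_cyclic_gen p S : prime p -> {in S, forall x, p.-elt x} ->
  {in S &, forall x y, cyclic <<[set x; y]>>} -> cyclic <<S>>.
Proof.
move=> pr_p pS cS; have [-> | [x0 Sx0]] := set_0Vmem S.
  by rewrite gen0 cyclic1.
have [m Sm max_m] := arg_maxnP (fun x => #[x]) Sx0.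
apply: cyclicS (cycle_cyclic m); rewrite gen_subG; apply/subsetP=> x Sx.
exact: p_elt_cyclic_set2_mem_cycle pr_p (pS x Sx) (pS m Sm) (cS x m Sx Sm)
  (max_m x Sx).
Qed.

Lemma pairwise_cyclic_gen S :
  {in S &, forall x y, cyclic <<[set x; y]>>} -> cyclic <<S>>.
Proof.
move=> cS; have abS : abelian <<S>>.
  rewrite abelian_gen; apply/centsP=> x Sx y Sy.
  exact: cyclic_set2_commute (cS x y Sx Sy).
apply: nil_Zgroup_cyclic (abelian_nil abS).
apply/forall_inP=> P /SylowP[p pr_p sylP].
have consttM_S : {in <<S>> &, {morph constt^~ p : x y / x * y}}.
  by move=> x y Sx Sy; rewrite consttM //; apply: (centsP abS).
pose f := Morphism consttM_S.
have sPfS : P \subset f @* <<S>>.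
  apply/subsetP=> x Px; have Sx := subsetP (pHall_sub sylP) x Px.
  rewrite -(constt_p_elt (mem_p_elt (pHall_pgroup sylP) Px)).
  exact: mem_morphim.
apply: cyclicS sPfS _.
rewrite /= (morphim_gen f) ?subset_gen // morphimEsub ?subset_gen //.
apply: (p_elt_pairwise_cyclic_gen pr_p).
  by move=> _ /imsetP[x _ ->]; apply: p_elt_constt.
move=> _ _ /imsetP[x Sx ->] /imsetP[y Sy ->]; apply: cyclicS (cS x y Sx Sy).
have sxyG z : z \in <[x]> :|: <[y]> -> z \in <<[set x; y]>>.
  by case/setUP; apply/subsetP;
    rewrite cycle_subG ?mem_gen_set2l ?mem_gen_set2r.
by rewrite gen_subG subUset !sub1set !sxyG ?inE ?cycle_constt ?orbT.
Qed.

End PairwiseCyclic.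

Section Cycliciser.
Variable gT : finGroupType.
Implicit Types (A : {set gT}) (G N : {group gT}) (x g h c : gT).

Lemma CycP A c :
  reflect (c \in A /\ {in A, forall h, cyclic <<[set c; h]>>}) (c \in Cyc A).
Proof.
rewrite inE; apply: (iffP andP) => -[Ac cycA]; split=> //.
  exact/forall_inP.
by apply/forall_inP.
Qed.

Lemma Cyc_sub A : Cyc A \subset A.
Proof. by apply/subsetP=> c /CycP[]. Qed.

Lemma cyclic_gen_setU1_Cyc G A g :
  A \subset Cyc G -> g \in G -> cyclic <<g |: A>>.
Proof.
move=> sAC Gg; have cycA x y : x \in A -> y \in G -> cyclic <<[set x; y]>>.
  by move=> Ax; case/CycP: (subsetP sAC x Ax) => _; apply.
have sgAG : g |: A \subset G.
  by rewrite subUset sub1set Gg (subset_trans sAC (Cyc_sub G)).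
apply: pairwise_cyclic_gen => x y /setU1P[-> | Ax] gAy; last first.
  exact: cycA Ax (subsetP sgAG y gAy).
case/setU1P: gAy => [-> | Ay]; first by rewrite setUid cycle_cyclic.
by rewrite setUC; apply: cycA.
Qed.

Lemma group_set_Cyc G : group_set (Cyc G).
Proof.
apply/group_setP; split=> [|x y Cx Cy].
  apply/CycP; split=> // h _; apply: cyclicS (cycle_cyclic h).
  by rewrite gen_subG subUset !sub1set group1 cycle_id.
apply/CycP; split=> [|h Gh]; first by rewrite groupM ?(subsetP (Cyc_sub G)).
have sxyC : [set x; y] \subset Cyc G by rewrite subUset !sub1set Cx Cy.
apply: cyclicS (cyclic_gen_setU1_Cyc sxyC Gh).
by rewrite gen_subG subUset !sub1set groupM ?mem_gen ?inE ?eqxx ?orbT.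
Qed.

Canonical Cyc_group G := Group (group_set_Cyc G).

Lemma Cyc_sub_center G : Cyc G \subset 'Z(G).
Proof.
apply/subsetP=> c /CycP[Gc cycG]; apply/setIP; split=> //.
by apply/centP=> h Gh; apply: cyclic_set2_commute (cycG h Gh).
Qed.

Lemma mem_cycle_coset N x g : x \in 'N(N) -> g \in 'N(N) ->
  coset N x \in <[coset N g]> -> x \in N * <[g]>.
Proof.
move=> Nx Ng; rewrite -quotient_cycle // -quotientK ?cycle_subG //.
exact: mem_morphpre.
Qed.

Lemma cyclic_gen_set2_mulg_cycle G A g x y : A \subset Cyc G -> g \in G ->
  x \in A * <[g]> -> y \in A * <[g]> -> cyclic <<[set x; y]>>.
Proof.
move=> sAC Gg /mulsgP[a1 z1 Aa1 z1g ->] /mulsgP[a2 z2 Aa2 z2g ->].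
have sa12C : [set a1; a2] \subset Cyc G.
  by rewrite subUset !sub1set !(subsetP sAC).
pose K := <<g |: [set a1; a2]>>.
have sgK : <[g]> \subset K by rewrite cycle_subG mem_gen ?setU11.
have [Kz1 Kz2] : z1 \in K /\ z2 \in K by split; apply: (subsetP sgK).
have [Ka1 Ka2] : a1 \in K /\ a2 \in K.
  by split; rewrite mem_gen // !inE eqxx ?orbT.
apply: cyclicS (cyclic_gen_setU1_Cyc sa12C Gg).
by rewrite gen_subG subUset !sub1set !groupM.
Qed.

End Cycliciser.

Lemma morphim_Cyc (gT rT : finGroupType) (D : {group gT})
    (f : {morphism D >-> rT}) (A : {set gT}) :
  f @* Cyc A \subset Cyc (f @* A).
Proof.
apply/subsetP=> _ /morphimP[c Dc /CycP[Ac cycA] ->].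
apply/CycP; split=> [|_ /morphimP[h Dh Ah ->]]; first exact: mem_morphim.
have <- : f @* <<[set c; h]>> = <<[set f c; f h]>>.
  by rewrite morphim_gen ?morphimU ?morphim_set1 // subUset !sub1set Dc.
exact: morphim_cyclic (cycA h Ah).
Qed.

Lemma quotient_Cyc (gT : finGroupType) (G N : {group gT}) :
  N \subset Cyc G -> Cyc (G / N) = Cyc G / N.
Proof.
move=> sNC; have sNZ := subset_trans sNC (Cyc_sub_center G).
have nNG := normal_norm (sub_center_normal sNZ).
apply/eqP; rewrite eqEsubset morphim_Cyc andbT.
apply/subsetP=> _ /CycP[/morphimP[x Nx Gx ->] cycX].
rewrite mem_quotient //; apply/CycP; split=> // h Gh.
have Nh := subsetP nNG h Gh.
have [Y defY] := cyclicP (cycX _ (mem_quotient N Gh)).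
have /morphimP[g Ng Gg defYg] : Y \in G / N.
  apply: subsetP (cycle_id Y); rewrite -defY gen_subG subUset !sub1set.
  by rewrite !mem_quotient.
rewrite {}defYg in defY; apply: cyclic_gen_set2_mulg_cycle sNC Gg _ _.
  by apply: mem_cycle_coset; rewrite // -defY mem_gen_set2l.
by apply: mem_cycle_coset; rewrite // -defY mem_gen_set2r.
Qed.

Theorem lemma2p2 (gT : finGroupType) (G : {group gT}) :
  (2 <= dgen G)%N ->
  Cyc (G / Cyc G) = 1 /\
  (forall N : {group gT}, N <| G -> Cyc (G / N) = 1 -> Cyc G \subset N).
Proof.
move=> _; split=> [|N /normal_norm nNG CycGN1].
  by rewrite quotient_Cyc // trivg_quotient.
rewrite -(quotient_sub1 (subset_trans (Cyc_sub G) nNG)) -CycGN1.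
exact: morphim_Cyc.
Qed.
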